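(* Let $K$ be a field, $S=K[x_1,\ldots,x_n]$ with $\mathfrak{m}=(x_1,\ldots,x_n)$, and let $I\subseteq S$ be a monomial ideal generated in degree $d$. Suppose that for every positive integer $m$ and every monomial $u\in(I^m:\mathfrak{m})\setminus I^m$ one has $\deg(u)=md-1$. Then $\mathrm{Soc}(I)$ is isomorphic, as an $\mathcal{F}(I)$-module, to an ideal of $\mathcal{F}(I)$. In particular, if $\mathrm{Soc}(I)\neq0$, then $\mathrm{rank}\,\mathrm{Soc}(I)=1$.
   Context: $\mathcal{F}(I)=\bigoplus_{m\ge0}I^m/\mathfrak{m}I^m$ is the fiber cone of $I$ and $\mathrm{Soc}(I)=\bigoplus_{m\ge0}(I^m:\mathfrak{m})/I^m$, a graded $\mathcal{F}(I)$-module via multiplication. *)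

From HB Require Import structures.
From mathcomp Require Import all_boot all_order all_algebra.
From mathcomp Require Import mpoly.
Set Implicit Arguments. Unset Strict Implicit. Unset Printing Implicit Defensive.
Import GRing.Theory.
Local Open Scope ring_scope.

Section Defs.
Variables (K : fieldType) (n : nat).
Local Notation P := {mpoly K[n]}.

Definition ideal_gen (gs : seq P) (p : P) : Prop :=
  exists hs : seq P, size hs = size gs /\
    p = \sum_(i < size gs) hs`_i * gs`_i.

Definition maxideal : P -> Prop := ideal_gen [seq 'X_i | i <- enum 'I_n].

Definition ideal_mul (J L : P -> Prop) (p : P) : Prop :=
  exists s : seq (P * P), (forall x, x \in s -> J x.1 /\ L x.2) /\
    p = \sum_(x <- s) x.1 * x.2.

Fixpoint ideal_pow (I : P -> Prop) (k : nat) : P -> Prop :=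
  match k with
  | 0 => fun _ => True
  | k'.+1 => ideal_mul (ideal_pow I k') I
  end.

Definition colon (J M : P -> Prop) (u : P) : Prop := forall v, M v -> J (u * v).

Definition monomial_ideal (gens : seq 'X_{1..n}) : P -> Prop :=
  ideal_gen [seq 'X_[m] | m <- gens].

(* ---- graded objects, given by representatives ---------------------------
   An element of F(I) = \bigoplus_k I^k / m I^k (resp. of
   Soc(I) = \bigoplus_k (I^k : m) / I^k) is represented by a finitely
   supported family g : nat -> S with g k in I^k (resp. in (I^k : m)),
   modulo the componentwise equivalence g k - g' k in m I^k (resp. in I^k). *)

Definition fin_supp (g : nat -> P) : Prop := exists N, forall k, (N < k)%N -> g k = 0.

Definition F_valid (I : P -> Prop) (g : nat -> P) : Prop :=
  fin_supp g /\ forall k, ideal_pow I k (g k).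
Definition F_eq (I : P -> Prop) (g g' : nat -> P) : Prop :=
  forall k, ideal_mul maxideal (ideal_pow I k) (g k - g' k).

Definition Soc_valid (I : P -> Prop) (c : nat -> P) : Prop :=
  fin_supp c /\ forall k, colon (ideal_pow I k) maxideal (c k).
Definition Soc_eq (I : P -> Prop) (c c' : nat -> P) : Prop :=
  forall k, ideal_pow I k (c k - c' k).

Definition gzero : nat -> P := fun _ => 0.
Definition gadd (g g' : nat -> P) : nat -> P := fun k => g k + g' k.
(* graded multiplication (ring structure of F(I) and its action on Soc(I)) *)
Definition gmul (f c : nat -> P) : nat -> P :=
  fun k => \sum_(i < k.+1) f i * c (k - i)%N.

(* Soc(I) is isomorphic, as an F(I)-module, to an ideal of F(I): there is an
   injective F(I)-linear map Soc(I) -> F(I) (whose image is then an ideal). *)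
Definition soc_iso_to_ideal (I : P -> Prop) : Prop :=
  exists phi : (nat -> P) -> (nat -> P),
    [/\ forall c, Soc_valid I c -> F_valid I (phi c),
        forall c c', Soc_valid I c -> Soc_valid I c' ->
          (Soc_eq I c c' <-> F_eq I (phi c) (phi c')),
        forall c c', Soc_valid I c -> Soc_valid I c' ->
          F_eq I (phi (gadd c c')) (gadd (phi c) (phi c')) &
        forall f c, F_valid I f -> Soc_valid I c ->
          F_eq I (phi (gmul f c)) (gmul f (phi c))].

Definition soc_lin_indep (I : P -> Prop) (cs : seq (nat -> P)) : Prop :=
  forall fs : seq (nat -> P), size fs = size cs ->
    (forall i, (i < size fs)%N -> F_valid I (nth gzero fs i)) ->
    Soc_eq I (\big[gadd/gzero]_(i < size cs) gmul (nth gzero fs i) (nth gzero cs i)) gzero ->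
    forall i, (i < size fs)%N -> F_eq I (nth gzero fs i) gzero.

Definition soc_rank (I : P -> Prop) (r : nat) : Prop :=
  (exists cs : seq (nat -> P), size cs = r /\
     (forall i, (i < size cs)%N -> Soc_valid I (nth gzero cs i)) /\ soc_lin_indep I cs)
  /\ (forall cs : seq (nat -> P), size cs = r.+1 ->
     (forall i, (i < size cs)%N -> Soc_valid I (nth gzero cs i)) -> ~ soc_lin_indep I cs).

Definition soc_nonzero (I : P -> Prop) : Prop :=
  exists c, Soc_valid I c /\ ~ Soc_eq I c gzero.

End Defs.

From HB Require Import structures.
From mathcomp Require Import all_boot all_order all_algebra.
From mathcomp Require Import mpoly.
From mathcomp Require Import zify ring.
From Stdlib Require Import Classical.

Set Implicit Arguments. Unset Strict Implicit. Unset Printing Implicit Defensive.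
Import GRing.Theory.
Local Open Scope ring_scope.

(* Every power I^k is generated by monomials of degree kd, so m I^k is
   generated in degree kd + 1, while by hypothesis the monomials of (I^k : m)
   outside I^k have degree kd - 1.  Hence multiplication by a single variable x
   maps (I^k : m)/I^k injectively into I^k/m I^k, and c |-> x c is an injective
   F(I)-linear map Soc(I) -> F(I).
   Modulo I^k (resp. m I^k) an element of (I^k : m) (resp. of I^k) is
   determined by its homogeneous component of degree kd - 1 (resp. kd); these
   components multiply, and the polynomial ring is a domain, so Soc(I) is
   torsion-free.  Any a, b in Soc(I) satisfy (x b) a - (x a) b = 0, so the rank
   is 1.  Without variables m = 0, and the hypothesis forces 1 in I, so that
   Soc(I) = 0. *)

Section IdealClosure.
Variable R : comPzRingType.

Definition is_ideal (J : R -> Prop) :=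
  [/\ J 0, forall p q, J p -> J q -> J (p + q) & forall r p, J p -> J (r * p)].

Variable J : R -> Prop.
Hypothesis J_ideal : is_ideal J.

Lemma ideal0 : J 0. Proof. by case: J_ideal. Qed.

Lemma idealD p q : J p -> J q -> J (p + q).
Proof. by case: J_ideal => _ + _; apply. Qed.

Lemma idealMl r p : J p -> J (r * p).
Proof. by case: J_ideal => _ _; apply. Qed.

Lemma idealMr r p : J p -> J (p * r).
Proof. by rewrite mulrC; apply: idealMl. Qed.

Lemma idealN p : J p -> J (- p).
Proof. by rewrite -mulN1r; apply: idealMl. Qed.

Lemma idealB p q : J p -> J q -> J (p - q).
Proof. by move=> Jp Jq; apply/idealD/idealN. Qed.

Lemma ideal_sum (I : eqType) (r : seq I) (F : I -> R) :
  (forall i, i \in r -> J (F i)) -> J (\sum_(i <- r) F i).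
Proof.
elim: r => [|x r IHr] JF; first by rewrite big_nil; apply: ideal0.
rewrite big_cons; apply: idealD; first by apply: JF; rewrite mem_head.
by apply: IHr => i ri; apply: JF; rewrite inE ri orbT.
Qed.

End IdealClosure.

Section MonomialIdeals.
Variables (K : fieldType) (n : nat).
Local Notation P := {mpoly K[n]}.
Local Notation M := (@maxideal K n).

Lemma ideal_gen_ideal (gs : seq P) : is_ideal (ideal_gen gs).
Proof.
split.
- exists (nseq (size gs) 0); rewrite size_nseq; split=> //.
  by rewrite big1 // => i _; rewrite nth_nseq if_same mul0r.
- move=> p q [hp [_ ->]] [hq [_ ->]].
  exists (mkseq (fun i => hp`_i + hq`_i) (size gs)); rewrite size_mkseq; split=> //.
  by rewrite -big_split /=; apply: eq_bigr => i _; rewrite nth_mkseq // mulrDl.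
- move=> r p [hp [_ ->]].
  exists (mkseq (fun i => r * hp`_i) (size gs)); rewrite size_mkseq; split=> //.
  by rewrite mulr_sumr; apply: eq_bigr => i _; rewrite nth_mkseq // mulrA.
Qed.

Lemma ideal_gen_mem (gs : seq P) g : g \in gs -> ideal_gen gs g.
Proof.
move=> gs_g; exists (mkseq (fun i => (i == index g gs)%:R) (size gs)).
rewrite size_mkseq; split=> //.
have ltg : (index g gs < size gs)%N by rewrite index_mem.
rewrite (bigD1 (Ordinal ltg)) //= nth_mkseq // eqxx mul1r nth_index // big1 ?addr0 //.
move=> i /eqP neq; rewrite nth_mkseq //; case: eqP => [eq_i|]; last by rewrite mul0r.
by case: neq; apply: val_inj.
Qed.

Lemma ideal_mul_ideal (J L : P -> Prop) : is_ideal J -> is_ideal (ideal_mul J L).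
Proof.
move=> J_ideal; split.
- by exists [::]; rewrite big_nil.
- move=> p q [s1 [h1 ->]] [s2 [h2 ->]]; exists (s1 ++ s2); rewrite big_cat.
  by split=> // x; rewrite mem_cat => /orP[/h1|/h2].
- move=> r p [s [h ->]]; exists [seq (r * x.1, x.2) | x <- s]; split.
    by move=> _ /mapP[x xs ->] /=; have [Jx Lx] := h x xs; split=> //; apply: idealMl.
  by rewrite big_map mulr_sumr; apply: eq_bigr => x _; rewrite mulrA.
Qed.

Lemma ideal_mul_mem (J L : P -> Prop) a b : J a -> L b -> ideal_mul J L (a * b).
Proof.
by move=> Ja Lb; exists [:: (a, b)]; rewrite big_seq1; split=> // x; rewrite inE => /eqP ->.
Qed.

Lemma ideal_mul_subr (J L : P -> Prop) p : is_ideal L -> ideal_mul J L p -> L p.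
Proof.
move=> L_ideal [s [h ->]]; apply: ideal_sum => // x xs.
by apply: idealMl => //; case: (h x xs).
Qed.

Lemma ideal_pow_ideal (I : P -> Prop) k : is_ideal I -> is_ideal (ideal_pow I k).
Proof. by move=> I_ideal; elim: k => [|k IHk] //=; apply: ideal_mul_ideal. Qed.

Lemma maxideal_ideal : is_ideal M. Proof. exact: ideal_gen_ideal. Qed.

Lemma maxideal_X i : M 'X_i.
Proof. by apply: ideal_gen_mem; apply: map_f; rewrite mem_enum. Qed.

Lemma colonB (J : P -> Prop) p q : is_ideal J ->
  colon J M p -> colon J M q -> colon J M (p - q).
Proof. by move=> J_ideal Cp Cq v Mv; rewrite mulrBl; apply: idealB; [|apply: Cp|apply: Cq]. Qed.

Definition gen_in_deg (J : P -> Prop) (e : nat) :=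
  forall p, J p -> forall m, m \in msupp p ->
  exists g, [/\ J 'X_[g], mdeg g = e & (g <= m)%MM].

Lemma gen_in_deg_ideal_gen (gs : seq P) e :
  (forall q, q \in gs -> exists g, q = 'X_[g] /\ mdeg g = e) ->
  gen_in_deg (ideal_gen gs) e.
Proof.
move=> gs_mono p [hs [_ ->]] m /msupp_sum_le /flattenP[_ /mapP[i _ ->]].
have gs_i := mem_nth 0 (ltn_ord i).
have [g [gs_iE deg_g]] := gs_mono _ gs_i.
rewrite gs_iE (perm_mem (msuppMX _ _)) => /mapP[m' _ ->].
exists g; split=> //; last exact: lem_addr.
by rewrite -gs_iE; apply: ideal_gen_mem.
Qed.

Lemma gen_in_deg_mul (J L : P -> Prop) e1 e2 :
  gen_in_deg J e1 -> gen_in_deg L e2 -> gen_in_deg (ideal_mul J L) (e1 + e2).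
Proof.
move=> genJ genL p [s [JLs ->]] m /msupp_sum_le /flattenP[_ /mapP[x xs ->]].
move=> /msuppM_le /allpairsP[[m1 m2] /= [m1_x m2_x ->]].
rewrite filter_predT in xs; have [Jx Lx] := JLs x xs.
have [g1 [Jg1 deg_g1 le_g1]] := genJ _ Jx _ m1_x.
have [g2 [Lg2 deg_g2 le_g2]] := genL _ Lx _ m2_x.
exists (g1 + g2)%MM; split; first by rewrite mpolyXD; apply: ideal_mul_mem.
  by rewrite mdegD deg_g1 deg_g2.
by apply/mnm_lepP => i; rewrite !mnmDE leq_add //; apply/mnm_lepP.
Qed.

Lemma gen_in_deg_full : gen_in_deg (fun _ => True) 0.
Proof.
move=> p _ m _; exists 0%MM; split; rewrite ?mdeg0 //.
by apply/mnm_lepP => i; rewrite mnm0E.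
Qed.

Lemma gen_in_deg_maxideal : gen_in_deg M 1.
Proof.
by apply: gen_in_deg_ideal_gen => _ /mapP[i _ ->]; exists U_(i)%MM; rewrite mdeg1.
Qed.

Section GeneratedInDegree.
Variables (J : P -> Prop) (e : nat).
Hypotheses (J_ideal : is_ideal J) (genJ : gen_in_deg J e).

Lemma gen_in_deg_msupp p m : J p -> m \in msupp p -> J 'X_[m].
Proof.
move=> Jp mp; have [g [Jg _ le_gm]] := genJ Jp mp.
by rewrite -(submK le_gm) mpolyXD; apply: idealMl.
Qed.

Lemma gen_in_deg_mdeg p m : J p -> m \in msupp p -> (e <= mdeg m)%N.
Proof.
move=> Jp mp; have [g [_ deg_g le_gm]] := genJ Jp mp.
by rewrite -(submK le_gm) mdegD deg_g leq_addl.
Qed.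

Lemma colon_msupp p m : colon J M p -> m \in msupp p -> colon J M 'X_[m].
Proof.
move=> Cp mp v [hs [_ ->]]; rewrite mulr_sumr; apply: ideal_sum => // i _.
rewrite mulrCA; apply: idealMl => //.
have /mapP[j _ ->] := mem_nth 0 (ltn_ord i).
rewrite -mpolyXD addmC; apply: (gen_in_deg_msupp (Cp _ (maxideal_X j))).
by rewrite mcoeff_msupp mcoeffMX -mcoeff_msupp.
Qed.

End GeneratedInDegree.

Lemma maxideal_mpolyX m : m != 0%MM -> M 'X_[m].
Proof.
move=> m_neq0; have /existsP[i m_i] : [exists i, 0 < m i]%N.
  apply: contraR m_neq0 => /existsPn m0; apply/eqP/mnmP => i.
  by rewrite mnm0E; apply/eqP; rewrite -leqn0 leqNgt m0.
have le_im : (U_(i) <= m)%MM.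
  by apply/mnm_lepP => j; rewrite mnm1E; case: eqP => [<-|].
by rewrite -(submK le_im) mpolyXD; apply: (idealMl maxideal_ideal); apply: maxideal_X.
Qed.

Lemma ideal_of_msupp (J : P -> Prop) p :
  is_ideal J -> (forall m, m \in msupp p -> J 'X_[m]) -> J p.
Proof.
move=> J_ideal Jm; rewrite [p]mpolyE; apply: ideal_sum => // m mp.
by rewrite -mul_mpolyC; apply: (idealMl J_ideal); apply: Jm.
Qed.

End MonomialIdeals.

Arguments maxideal_ideal {K n}.
Arguments maxideal_X {K n}.
Arguments gen_in_deg_maxideal {K n}.

Section LowestDegree.
Variables (K : fieldType) (n : nat).
Local Notation P := {mpoly K[n]}.
Local Notation pi := (@pihomog n K mdeg).

Definition mdeg_ge e (p : P) := forall m, m \in msupp p -> (e <= mdeg m)%N.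

Lemma mcoeff_pihomog e (p : P) m : (pi e p)@_m = if mdeg m == e then p@_m else 0.
Proof.
rewrite pihomogE raddf_sum /=.
under eq_bigr do rewrite mcoeffZ mcoeffX.
case: (boolP (m \in msupp p)) => mp.
  rewrite big_mkcond (bigD1_seq m) ?msupp_uniq //= eqxx mulr1 big1 ?addr0 //.
  by move=> m' neq; case: ifP => // _; rewrite (negbTE neq) mulr0.
rewrite (memN_msupp_eq0 mp) if_same big1 // => m' _.
by case: eqP => [->|]; rewrite ?(memN_msupp_eq0 mp) ?mul0r ?mulr0.
Qed.

Lemma mdeg_geM a b (p q : P) : mdeg_ge a p -> mdeg_ge b q -> mdeg_ge (a + b) (p * q).
Proof.
move=> ge_p ge_q m /msuppM_le /allpairsP[[m1 m2] /= [m1p m2q ->]].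
by rewrite mdegD leq_add ?ge_p ?ge_q.
Qed.

Lemma mdeg_geD e (p q : P) : mdeg_ge e p -> mdeg_ge e q -> mdeg_ge e (p + q).
Proof. by move=> ge_p ge_q m /msuppD_le; rewrite mem_cat => /orP[/ge_p|/ge_q]. Qed.

Lemma pihomog_mdeg_gt e (p : P) : mdeg_ge e.+1 p -> pi e p = 0.
Proof.
move=> ge_p; apply/mpolyP => m; rewrite mcoeff_pihomog mcoeff0.
case: eqP => // deg_m; apply/eqP; rewrite mcoeff_eq0; apply/negP => /ge_p.
by rewrite deg_m ltnn.
Qed.

Lemma mdeg_ge_pihomog e (p : P) : mdeg_ge e (pi e p).
Proof.
by move=> m; rewrite mcoeff_msupp mcoeff_pihomog; case: (mdeg m =P e) => [->|_]; rewrite ?eqxx.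
Qed.

Lemma mdeg_ge_sub_pihomog e (p : P) : mdeg_ge e p -> mdeg_ge e.+1 (p - pi e p).
Proof.
move=> ge_p m; rewrite mcoeff_msupp mcoeffB mcoeff_pihomog.
case: ifP => [_|neq]; first by rewrite subrr eqxx.
by rewrite subr0 -mcoeff_msupp => /ge_p; rewrite leq_eqVlt eq_sym neq.
Qed.

Lemma pihomogM_mdeg_ge a b (p q : P) : mdeg_ge a p -> mdeg_ge b q ->
  pi (a + b) (p * q) = pi a p * pi b q.
Proof.
move=> ge_p ge_q.
have -> : p * q = pi a p * pi b q + (pi a p * (q - pi b q) + (p - pi a p) * q) by ring.
have ge_rest : mdeg_ge (a + b).+1 (pi a p * (q - pi b q) + (p - pi a p) * q).
  apply: mdeg_geD; first by rewrite -addnS; apply/mdeg_geM/mdeg_ge_sub_pihomog/ge_q/mdeg_ge_pihomog.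
  by rewrite -addSn; apply/mdeg_geM/ge_q/mdeg_ge_sub_pihomog.
rewrite pihomogD (pihomog_mdeg_gt ge_rest) addr0 pihomog_dE //.
by apply: dhomogM; apply: pihomogP.
Qed.

End LowestDegree.

Lemma convolution_eq0 (R : idomainType) (F C : nat -> R) j :
  (0 < j)%N -> C j != 0 ->
  (forall k, \sum_(i < k) F i * C (k - i)%N = 0) -> forall i, F i = 0.
Proof.
move=> j_gt0 Cj_neq0 conv0 i; apply/eqP/negPn/negP => Fi_neq0.
have exF : exists i, F i != 0 by exists i.
have exC : exists j, (0 < j)%N && (C j != 0) by exists j; rewrite j_gt0.
have [i0 Fi0_neq0 min_i0] := ex_minnP exF.
have [j0 /andP[j0_gt0 Cj0_neq0] min_j0] := ex_minnP exC.
have lt_i0 : (i0 < i0 + j0)%N by rewrite -addn1 leq_add2l.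
move: (conv0 (i0 + j0)%N); rewrite (bigD1 (Ordinal lt_i0)) //= addKn big1 ?addr0.
  by move/eqP; rewrite mulf_eq0 (negbTE Fi0_neq0) (negbTE Cj0_neq0).
move=> k /eqP neq_k; have [lt_k|gt_k|eq_k] := ltngtP k i0; last first.
- by case: neq_k; apply: val_inj.
- have /eqP -> : C (i0 + j0 - k)%N == 0; last by rewrite mulr0.
  apply/negPn/negP => Ck_neq0; move: (min_j0 (i0 + j0 - k)%N).
  by rewrite Ck_neq0 andbT subn_gt0 ltn_ord => /(_ isT); lia.
- have /eqP -> : F k == 0; last by rewrite mul0r.
  by apply/contraTT: lt_k => /min_i0; rewrite -leqNgt.
Qed.

Section GradedFamilies.
Variables (K : fieldType) (n : nat).
Local Notation P := {mpoly K[n]}.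

Lemma gmulC (u v : nat -> P) : gmul u v =1 gmul v u.
Proof.
move=> k; rewrite /gmul (reindex_inj rev_ord_inj) /=; apply: eq_bigr => i _.
by rewrite subSS subKn 1?mulrC // -ltnS.
Qed.

Lemma F_eq_eqfun (I : P -> Prop) (g g' : nat -> P) : g =1 g' -> F_eq I g g'.
Proof.
move=> eq_g k; rewrite eq_g subrr.
exact: ideal0 (ideal_mul_ideal _ maxideal_ideal).
Qed.

Variable I : P -> Prop.
Hypothesis I_pow_full : forall k p, ideal_pow I k p.

Lemma full_soc_iso_to_ideal : soc_iso_to_ideal I.
Proof.
exists (fun _ => gzero K n); split=> //.
- by move=> c _; split=> //; exists 0%N.
- by move=> c c' _ _; split=> _ //; apply: F_eq_eqfun.
- by move=> c c' _ _; apply: F_eq_eqfun => k; rewrite /gadd /gzero addr0.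
- move=> f c _ _; apply: F_eq_eqfun => k.
  by rewrite /gmul /gzero big1 // => i _; rewrite mulr0.
Qed.

Lemma full_soc_zero : ~ soc_nonzero I.
Proof. by case=> c [_ []]. Qed.

End GradedFamilies.

Section SocleEmbedding.
Variables (K : fieldType) (n d : nat) (gens : seq 'X_{1..n}).
Local Notation P := {mpoly K[n]}.
Local Notation I := (@monomial_ideal K n gens).
Local Notation M := (@maxideal K n).
Local Notation pi := (@pihomog n K mdeg).

Hypothesis gens_deg : forall mo, mo \in gens -> mdeg mo = d.
Hypothesis socle_deg : forall (m : nat) (mo : 'X_{1..n}), (0 < m)%N ->
  colon (ideal_pow I m) M 'X_[mo] -> ~ ideal_pow I m 'X_[mo] -> (mdeg mo).+1 = (m * d)%N.

Lemma pow_ideal k : is_ideal (ideal_pow I k).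
Proof. exact/ideal_pow_ideal/ideal_gen_ideal. Qed.

Lemma mpow_ideal k : is_ideal (ideal_mul M (ideal_pow I k)).
Proof. exact/ideal_mul_ideal/maxideal_ideal. Qed.

Lemma gen_in_deg_pow k : gen_in_deg (ideal_pow I k) (k * d).
Proof.
elim: k => [|k IHk]; first exact: gen_in_deg_full.
rewrite mulSnr; apply: gen_in_deg_mul IHk _.
by apply: gen_in_deg_ideal_gen => _ /mapP[g gs_g ->]; exists g; rewrite gens_deg.
Qed.

Lemma gen_in_deg_mpow k : gen_in_deg (ideal_mul M (ideal_pow I k)) (k * d).+1.
Proof. by rewrite -add1n; apply: gen_in_deg_mul gen_in_deg_maxideal (@gen_in_deg_pow k). Qed.

Lemma colon_msupp_mdeg k c m : colon (ideal_pow I k) M c -> m \in msupp c ->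
  ideal_pow I k 'X_[m] \/ (mdeg m).+1 = (k * d)%N.
Proof.
move=> Cc mc; have [|notIm] := classic (ideal_pow I k 'X_[m]); first by left.
right; have Cm := colon_msupp (pow_ideal k) (@gen_in_deg_pow k) Cc mc.
by case: k {Cc} Cm notIm => [|k] Cm notIm; [case: notIm | apply: socle_deg].
Qed.

Lemma colon_not_pow_gt0 k c : colon (ideal_pow I k) M c -> ~ ideal_pow I k c ->
  (0 < k * d)%N.
Proof.
move=> Cc notIc; have [m mc notIm] : exists2 m, m \in msupp c & ~ ideal_pow I k 'X_[m].
  apply: NNPP => all_m; apply: notIc; apply: ideal_of_msupp (pow_ideal k) _ => m mc.
  by apply: NNPP => notIm; apply: all_m; exists m.
by have [//|<-] := colon_msupp_mdeg Cc mc.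
Qed.

Lemma colon_mulX_mpow k c i : colon (ideal_pow I k) M c ->
  ideal_mul M (ideal_pow I k) ('X_i * c) -> ideal_pow I k c.
Proof.
move=> Cc MIc; apply: ideal_of_msupp (pow_ideal k) _ => m mc.
have [//|deg_m] := colon_msupp_mdeg Cc mc.
have : (U_(i) + m)%MM \in msupp ('X_i * c).
  by rewrite mulrC mcoeff_msupp mcoeffMX -mcoeff_msupp.
by move=> /(gen_in_deg_mdeg (@gen_in_deg_mpow k) MIc); rewrite mdegD mdeg1; lia.
Qed.

Lemma mdeg_ge_pow k f : ideal_pow I k f -> mdeg_ge (k * d) f.
Proof. by move=> If m; apply: (gen_in_deg_mdeg (@gen_in_deg_pow k) If). Qed.

Lemma mdeg_ge_colon k c : colon (ideal_pow I k) M c -> mdeg_ge (k * d).-1 c.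
Proof.
move=> Cc m mc; have [Im|<-] := colon_msupp_mdeg Cc mc; last exact: leqnn.
apply: leq_trans (leq_pred _) (mdeg_ge_pow Im _); by rewrite msuppX mem_seq1.
Qed.

Lemma colon_pihomog_eq0 k c : colon (ideal_pow I k) M c ->
  pi (k * d).-1 c = 0 -> ideal_pow I k c.
Proof.
move=> Cc pi_c0; apply: ideal_of_msupp (pow_ideal k) _ => m mc.
have [//|deg_m] := colon_msupp_mdeg Cc mc.
have := congr1 (mcoeff m) pi_c0; rewrite mcoeff_pihomog mcoeff0 -deg_m eqxx => c_m0.
by move: mc; rewrite mcoeff_msupp c_m0 eqxx.
Qed.

Lemma pow_pihomog_eq0 k f : ideal_pow I k f -> pi (k * d) f = 0 ->
  ideal_mul M (ideal_pow I k) f.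
Proof.
move=> If pi_f0; apply: ideal_of_msupp (mpow_ideal k) _ => m mf.
have [g [Ig deg_g le_gm]] := @gen_in_deg_pow k _ If _ mf.
have deg_m : mdeg m != (k * d)%N.
  apply: contraTneq mf => deg_m; rewrite mcoeff_msupp negbK.
  by have := congr1 (mcoeff m) pi_f0; rewrite mcoeff_pihomog mcoeff0 deg_m eqxx => ->.
have mg_neq0 : (m - g)%MM != 0%MM.
  by apply: contraNneq deg_m => mg0; rewrite -(submK le_gm) mg0 add0m deg_g.
by rewrite -(submK le_gm) mpolyXD; apply: ideal_mul_mem; first exact: maxideal_mpolyX.
Qed.

Lemma pihomog_pow_pred k p : (0 < k * d)%N -> ideal_pow I k p -> pi (k * d).-1 p = 0.
Proof. by move=> kd_gt0 /mdeg_ge_pow; rewrite -(prednK kd_gt0); apply: pihomog_mdeg_gt. Qed.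

Lemma pihomog_gmul f c k : (0 < d)%N ->
  (forall i, ideal_pow I i (f i)) -> (forall j, colon (ideal_pow I j) M (c j)) ->
  pi (k.+1 * d).-1 (gmul f c k.+1) =
  \sum_(i < k.+1) pi (i * d) (f i) * pi ((k.+1 - i) * d).-1 (c (k.+1 - i)%N).
Proof.
move=> d_gt0 If Cc; rewrite /gmul raddf_sum big_ord_recr /= subnn.
rewrite pihomog_pow_pred ?addr0 ?muln_gt0 ?d_gt0 //; last by apply: (idealMr (pow_ideal _)).
apply: eq_bigr => i _.
have rest_gt0 : (0 < (k.+1 - i) * d)%N by rewrite muln_gt0 subn_gt0 ltn_ord d_gt0.
have -> : ((k.+1 * d).-1 = i * d + ((k.+1 - i) * d).-1)%N.
  by rewrite -[in LHS](subnKC (ltnW (ltn_ord i))) mulnDl; lia.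
exact: pihomogM_mdeg_ge (mdeg_ge_pow (If i)) (mdeg_ge_colon (Cc _)).
Qed.

Lemma soc_torsion_free c f : Soc_valid I c -> ~ Soc_eq I c (gzero K n) ->
  F_valid I f -> Soc_eq I (gmul f c) (gzero K n) -> F_eq I f (gzero K n).
Proof.
move=> [_ Cc] c_neq0 [_ If] fc0.
have [j notIcj] : exists j, ~ ideal_pow I j (c j).
  apply: NNPP => all_j; apply: c_neq0 => k; rewrite subr0.
  by apply: NNPP => notIck; apply: all_j; exists k.
have jd_gt0 := colon_not_pow_gt0 (Cc j) notIcj.
have [j_gt0 d_gt0] : (0 < j)%N /\ (0 < d)%N by apply/andP; rewrite -muln_gt0.
have lead_cj : pi (j * d).-1 (c j) != 0.
  by apply: contra_notN notIcj => /eqP; apply: colon_pihomog_eq0.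
have lead_f0 := convolution_eq0 (F := fun i => pi (i * d) (f i))
  (C := fun j => pi (j * d).-1 (c j)) j_gt0 lead_cj.
move=> k; rewrite subr0; apply: pow_pihomog_eq0 => //; apply: lead_f0 => -[|k'].
  by rewrite big_ord0.
rewrite -pihomog_gmul //; apply: pihomog_pow_pred; first by rewrite muln_gt0 d_gt0.
by have := fc0 k'.+1; rewrite subr0.
Qed.

Definition mulX (i : 'I_n) (c : nat -> P) : nat -> P := fun k => 'X_i * c k.

Lemma F_valid_mulX i c : Soc_valid I c -> F_valid I (mulX i c).
Proof.
move=> [[N c_supp] Cc]; split; first by exists N => k /c_supp; rewrite /mulX => ->; rewrite mulr0.
by move=> k; rewrite /mulX mulrC; apply/Cc/maxideal_X.
Qed.

Lemma Soc_eq_mulX i c c' : Soc_valid I c -> Soc_valid I c' ->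
  Soc_eq I c c' <-> F_eq I (mulX i c) (mulX i c').
Proof.
move=> [_ Cc] [_ Cc']; split=> eq_c k.
  by rewrite /mulX -mulrBr; apply/ideal_mul_mem/eq_c/maxideal_X.
apply: colon_mulX_mpow (colonB (pow_ideal k) (Cc k) (Cc' k)) _.
by rewrite mulrBr; apply: eq_c.
Qed.

Lemma soc_iso_to_ideal_mulX (i : 'I_n) : soc_iso_to_ideal I.
Proof.
exists (mulX i); split.
- exact: F_valid_mulX.
- exact: Soc_eq_mulX.
- by move=> c c' _ _; apply: F_eq_eqfun => k; rewrite /mulX /gadd mulrDr.
- move=> f c _ _; apply: F_eq_eqfun => k; rewrite /mulX /gmul mulr_sumr.
  by apply: eq_bigr => j _; rewrite mulrCA.
Qed.

Lemma soc_lin_indep2 a b f g : soc_lin_indep I [:: a; b] -> F_valid I f -> F_valid I g ->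
  (forall k, ideal_pow I k (gmul f a k + gmul g b k)) ->
  F_eq I f (gzero K n) /\ F_eq I g (gzero K n).
Proof.
move=> indep Ff Fg fg0.
suff fg_eq0 : forall i, (i < 2)%N -> F_eq I (nth (gzero K n) [:: f; g] i) (gzero K n).
  by split; [apply: (fg_eq0 0%N) | apply: (fg_eq0 1%N)].
apply: (indep [:: f; g]) => [//|[|[]] //|k].
by rewrite !big_ord_recl big_ord0 /gadd /gzero /= subr0 addr0; apply: fg0.
Qed.

Lemma soc_lin_indep1 c : Soc_valid I c -> ~ Soc_eq I c (gzero K n) ->
  soc_lin_indep I [:: c].
Proof.
move=> Sc c_neq0 [|f []] // _ Ff fc0 [] // _.
apply: (soc_torsion_free Sc c_neq0 (Ff 0%N isT)) => k.
by move: (fc0 k); rewrite big_ord_recl big_ord0 /gadd /gzero /= addr0.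
Qed.

Lemma soc_not_lin_indep2 (i : 'I_n) a b : Soc_valid I a -> Soc_valid I b ->
  ~ soc_lin_indep I [:: a; b].
Proof.
move=> [a_supp Ca] Sb indep; pose neg_mulXb k := - mulX i b k.
have [_ mulXa_eq0] : F_eq I neg_mulXb (gzero K n) /\ F_eq I (mulX i a) (gzero K n).
  apply: (soc_lin_indep2 indep); last 1 first.
  - move=> k; rewrite gmulC /gmul -big_split big1 => [|j _]; first exact: ideal0 (pow_ideal k).
    by rewrite /= /neg_mulXb /mulX; ring.
  - have [[N b_supp] Fb] := F_valid_mulX i Sb.
    split; first by exists N => k /b_supp; rewrite /neg_mulXb => ->; rewrite oppr0.
    by move=> k; apply: (idealN (pow_ideal k)); apply: Fb.
  - exact: F_valid_mulX.
have Ia k : ideal_pow I k (a k).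
  apply: (colon_mulX_mpow (i := i) (Ca k)).
  by have := mulXa_eq0 k; rewrite /gzero subr0.
(* As a = 0 in Soc(I), the relation 1 a + 0 b = 0 would put 1 into m. *)
pose one k : P := if k == 0%N then 1 else 0.
have [one_eq0 _] : F_eq I one (gzero K n) /\ F_eq I (gzero K n) (gzero K n).
  apply: (soc_lin_indep2 indep); last 1 first.
  - move=> k; rewrite /gmul big_ord_recl /= subn0 mul1r.
    rewrite [X in _ + X + _]big1 => [|j _]; last by rewrite mul0r.
    by rewrite big1 ?addr0 => [|j _]; [apply: Ia | rewrite mul0r].
  - split; first by exists 0%N => -[].
    by case=> [|k] //; apply: ideal0 (pow_ideal _).
  - by split; [exists 0%N | move=> k; apply: ideal0 (pow_ideal k)].
have := one_eq0 0%N; rewrite /one /gzero subr0 => /gen_in_deg_mdeg.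
by move=> /(_ _ (@gen_in_deg_mpow 0%N) 0%MM); rewrite msupp1 mem_seq1 eqxx mdeg0 => /(_ isT).
Qed.

Lemma soc_rank1 (i : 'I_n) : soc_nonzero I -> soc_rank I 1.
Proof.
move=> [c [Sc c_neq0]]; split.
  by exists [:: c]; split=> //; split; [case | apply: soc_lin_indep1].
move=> [|a [|b []]] // _ Sab.
by apply: (soc_not_lin_indep2 i); [apply: (Sab 0%N) | apply: (Sab 1%N)].
Qed.

Lemma pow_full_of_n0 : n = 0%N -> forall k p, ideal_pow I k p.
Proof.
move=> n0.
have M0 v : M v -> v = 0.
  move=> [hs [_ ->]]; apply: big1 => -[j lt_j] _; exfalso.
  by move: lt_j; rewrite size_map size_enum_ord n0.
have I2_1 : ideal_pow I 2 1.
  have C1 : colon (ideal_pow I 2) M 1.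
    by move=> v /M0 ->; rewrite mulr0; apply: ideal0 (pow_ideal 2).
  have supp1 : 0%MM \in msupp (1 : P) by rewrite msupp1 mem_seq1.
  by have [|] := colon_msupp_mdeg C1 supp1; rewrite ?mpolyX0 // mdeg0; lia.
have pow1 k : ideal_pow I k 1.
  elim: k => //= k IHk; rewrite -(mulr1 1); apply: ideal_mul_mem => //.
  exact: ideal_mul_subr (ideal_gen_ideal _) I2_1.
by move=> k p; rewrite -(mulr1 p); apply: (idealMl (pow_ideal k)).
Qed.

End SocleEmbedding.

Theorem proposition1p3 (K : fieldType) (n d : nat) (gens : seq 'X_{1..n}) :
  (forall mo, mo \in gens -> mdeg mo = d) ->
  (forall (m : nat) (mo : 'X_{1..n}), (0 < m)%N ->
     colon (ideal_pow (@monomial_ideal K n gens) m) (@maxideal K n) 'X_[mo] ->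
     ~ ideal_pow (@monomial_ideal K n gens) m 'X_[mo] ->
     (mdeg mo).+1 = (m * d)%N) ->
  soc_iso_to_ideal (@monomial_ideal K n gens) /\
  (soc_nonzero (@monomial_ideal K n gens) -> soc_rank (@monomial_ideal K n gens) 1).
Proof.
move=> gens_deg socle_deg; have [n0|n_gt0] := posnP n.
  have pow_full := pow_full_of_n0 gens_deg socle_deg n0.
  by split=> [|/(full_soc_zero pow_full)//]; apply: full_soc_iso_to_ideal.
have x : 'I_n := Ordinal n_gt0.
split; first exact: soc_iso_to_ideal_mulX gens_deg socle_deg x.
exact: soc_rank1 gens_deg socle_deg x.
Qed.
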